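(* Let $(\mathcal V,[\cdot,\cdots,\cdot],S)$ be a generalized metric $n$-Leibniz algebra and $\mathfrak g=\mathrm{Im}\,D\subset\mathfrak{gl}(\mathcal V)$ with the commutator bracket $[\cdot,\cdot]_C$. There is a well-defined bilinear form $\omega$ on $\mathfrak g$ determined by $$\omega(D(u_1,\dots,u_{n-1}),D(v_1,\dots,v_{n-1}))=S(D(u_1,\dots,u_{n-1})v_1,v_2,\dots,v_{n-1}),$$ and $\omega$ is symmetric, non-degenerate and ad-invariant (i.e. $\omega([x,y]_C,z)=-\omega(y,[x,z]_C)$ for $x,y,z\in\mathfrak g$). Consequently $(\mathfrak g,[\cdot,\cdot]_C,\omega)$ is a metric Lie algebra.
   Context: All vector spaces are finite-dimensional over $\mathbb R$. An $n$-Leibniz algebra is a vector space $\mathcal V$ with an $n$-linear map $[\cdot,\cdots,\cdot]$ satisfying $[u_1,\dots,u_{n-1},[v_1,\dots,v_n]]=\sum_{i=1}^n[v_1,\dots,[u_1,\dots,u_{n-1},v_i],\dots,v_n]$. A symmetric $S\in\mathrm{Sym}^{n-1}(\mathcal V^* )$ is non-degenerate if $S(u,v_1,\dots,v_{n-2})=0$ for all $v_j$ implies $u=0$. A generalized metric $n$-Leibniz algebra is an $n$-Leibniz algebra with a symmetric non-degenerate $S\in\mathrm{Sym}^{n-1}(\mathcal V^* )$ satisfying (a) unitarity: $\sum_{i=1}^{n-1}S(v_1,\dots,[u_1,\dots,u_{n-1},v_i],\dots,v_{n-1})=0$ and (b) symmetry: $S([u_1,\dots,u_{n-1},v_1],v_2,\dots,v_{n-1})=S([v_1,\dots,v_{n-1},u_1],u_2,\dots,u_{n-1})$.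 $D(u_1,\dots,u_{n-1})\in\mathfrak{gl}(\mathcal V)$ is $u_n\mapsto[u_1,\dots,u_{n-1},u_n]$, extended linearly to $\otimes^{n-1}\mathcal V$; $\mathfrak g=\mathrm{Im}\,D$ is the span of all such operators, which is closed under the commutator $[A,B]_C=AB-BA$. A metric Lie algebra is a Lie algebra with a symmetric non-degenerate bilinear form $\omega$ with $\omega([x,y],z)=-\omega(y,[x,z])$. *)

(* The base field R (= the reals in the paper) is an arbitrary
   realFieldType; V = 'cV[R]_d is an arbitrary finite-dimensional space;
   operators on V are d x d matrices acting on column vectors (A *m v), so
   composition of operators is matrix product. n = k.+2 (so n >= 2). *)
From HB Require Import structures.
From mathcomp Require Import all_boot all_order all_algebra all_fingroup.
Set Implicit Arguments. Unset Strict Implicit. Unset Printing Implicit Defensive.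
Import Order.TTheory GRing.Theory Num.Theory.
Local Open Scope ring_scope.

Definition upd (T : Type) (m : nat) (f : {ffun 'I_m -> T}) (i : 'I_m) (x : T)
  : {ffun 'I_m -> T} := [ffun j => if j == i then x else f j].

Definition snoc (T : Type) (m : nat) (u : {ffun 'I_m -> T}) (w : T)
  : {ffun 'I_m.+1 -> T} :=
  [ffun j => if unlift ord_max j is Some l then u l else w].

Definition consv (T : Type) (m : nat) (w : T) (v : {ffun 'I_m -> T})
  : {ffun 'I_m.+1 -> T} :=
  [ffun j => if unlift ord0 j is Some l then v l else w].

Definition multilinear (R : realFieldType) (V W : lmodType R) (m : nat)
  (F : {ffun 'I_m -> V} -> W) : Prop :=
  forall (f : {ffun 'I_m -> V}) (i : 'I_m) (a : R) (x y : V),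
    F (upd f i (a *: x + y)) = a *: F (upd f i x) + F (upd f i y).

Definition multilinear_form (R : realFieldType) (V : lmodType R) (m : nat)
  (F : {ffun 'I_m -> V} -> R) : Prop :=
  forall (f : {ffun 'I_m -> V}) (i : 'I_m) (a : R) (x y : V),
    F (upd f i (a *: x + y)) = a * F (upd f i x) + F (upd f i y).

Definition symmetric_form (R : realFieldType) (V : lmodType R) (m : nat)
  (F : {ffun 'I_m -> V} -> R) : Prop :=
  forall (f : {ffun 'I_m -> V}) (s : 'S_m), F [ffun j => f (s j)] = F f.

Section Defs.
Variables (R : realFieldType) (d k : nat).
Local Notation V := 'cV[R]_d.
Variable br : {ffun 'I_k.+2 -> V} -> V.
Variable S : {ffun 'I_k.+1 -> V} -> R.

Definition Dop (u : {ffun 'I_k.+1 -> V}) (w : V) : V := br (snoc u w).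

Definition Dmx (u : {ffun 'I_k.+1 -> V}) : 'M[R]_d :=
  \matrix_(i, j) Dop u (delta_mx j 0) i 0.

Definition leibniz_identity : Prop :=
  forall (u : {ffun 'I_k.+1 -> V}) (v : {ffun 'I_k.+2 -> V}),
    Dop u (br v) = \sum_(i < k.+2) br (upd v i (Dop u (v i))).

Definition nondegenerate : Prop :=
  forall u : V, (forall v : {ffun 'I_k -> V}, S (consv u v) = 0) -> u = 0.

Definition unitarity : Prop :=
  forall (u v : {ffun 'I_k.+1 -> V}),
    \sum_(i < k.+1) S (upd v i (Dop u (v i))) = 0.

Definition symmetry_cond : Prop :=
  forall (u v : {ffun 'I_k.+1 -> V}),
    S (upd v ord0 (Dop u (v ord0))) = S (upd u ord0 (Dop v (u ord0))).

Definition generalized_metric_nLeibniz : Prop :=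
  [/\ multilinear br, leibniz_identity, multilinear_form S & symmetric_form S] /\
  [/\ nondegenerate, unitarity & symmetry_cond].

Definition inImD (x : 'M[R]_d) : Prop :=
  exists l : seq ({ffun 'I_k.+1 -> V} * R),
    x = \sum_(p <- l) p.2 *: Dmx p.1.
End Defs.

Definition commC (R : realFieldType) (d : nat) (x y : 'M[R]_d) : 'M[R]_d :=
  x *m y - y *m x.

(* The formula forces omega on generators, and the symmetry condition makes it
   symmetric in D(u) and D(v).  Hence, expanding either argument as a linear
   combination of generators D(v_p), the value sum_p c_p S(x v_p1, ...) does not
   depend on the expansion chosen, so omega is well defined and bilinear on g.
   Non-degeneracy of S gives non-degeneracy of omega.  The Leibniz identity says
   that [D(u), D(v)] = sum_i D(v_1, ..., D(u) v_i, ..., v_(n-1)), which gives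
   closure of g; combined with unitarity and symmetry it gives ad-invariance on
   generators, and bilinearity extends it to all of g. *)
From Pilot Require Import Defs.
From HB Require Import structures.
From mathcomp Require Import all_boot all_order all_algebra all_fingroup.
From Stdlib Require Import ClassicalEpsilon.
Import GRing.Theory Num.Theory.
Local Open Scope ring_scope.
Set Implicit Arguments. Unset Strict Implicit.

Section TupleUpdates.
Variable T : Type.

Lemma upd_at m (f : {ffun 'I_m -> T}) i x : upd f i x i = x.
Proof. by rewrite /upd ffunE eqxx. Qed.

Lemma upd_ne m (f : {ffun 'I_m -> T}) i j x : j != i -> upd f i x j = f j.
Proof. by rewrite /upd ffunE => /negbTE ->. Qed.

Lemma upd_upd m (f : {ffun 'I_m -> T}) i x y : upd (upd f i x) i y = upd f i y.
Proof. by apply/ffunP => j; rewrite /upd !ffunE; case: eqP. Qed.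

Lemma upd_updC m (f : {ffun 'I_m -> T}) i j x y : i != j ->
  upd (upd f i x) j y = upd (upd f j y) i x.
Proof.
move=> nij; apply/ffunP => l; rewrite /upd !ffunE.
by case: (eqVneq l j) => [-> | //]; rewrite eq_sym (negbTE nij).
Qed.

Lemma snoc_max m (u : {ffun 'I_m -> T}) w : snoc u w ord_max = w.
Proof. by rewrite /snoc ffunE unlift_none. Qed.

Lemma snoc_lift m (u : {ffun 'I_m -> T}) w i : snoc u w (lift ord_max i) = u i.
Proof. by rewrite /snoc ffunE liftK. Qed.

Lemma upd_snoc_max m (u : {ffun 'I_m -> T}) w z :
  upd (snoc u w) ord_max z = snoc u z.
Proof.
apply/ffunP => j; rewrite /upd /snoc !ffunE.
case: unliftP => [l -> | ->]; last by rewrite eqxx.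
by rewrite eq_sym (negbTE (neq_lift _ _)).
Qed.

Lemma upd_snoc_lift m (u : {ffun 'I_m -> T}) w i z :
  upd (snoc u w) (lift ord_max i) z = snoc (upd u i z) w.
Proof.
apply/ffunP => j; rewrite /upd /snoc !ffunE.
case: unliftP => [l -> | ->]; last by rewrite (negbTE (neq_lift _ _)).
by rewrite (inj_eq (@lift_inj _ _)) ffunE.
Qed.

Lemma consv_ord0 m (w : T) (v : {ffun 'I_m -> T}) : consv w v ord0 = w.
Proof. by rewrite /consv ffunE unlift_none. Qed.

Lemma upd_consv_ord0 m (w z : T) (v : {ffun 'I_m -> T}) :
  upd (consv w v) ord0 z = consv z v.
Proof.
apply/ffunP => j; rewrite /upd /consv !ffunE.
case: unliftP => [l -> | ->]; last by rewrite eqxx.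
by rewrite eq_sym (negbTE (neq_lift _ _)).
Qed.

End TupleUpdates.

Lemma mulmx_colI (R : pzRingType) m n (A B : 'M[R]_(m, n)) :
  (forall w : 'cV[R]_n, A *m w = B *m w) -> A = B.
Proof.
move=> AB; apply/matrixP => i j.
by have /matrixP/(_ i 0) := AB (delta_mx j 0); rewrite -!colE !mxE.
Qed.

Section Commutator.
Variables (R : realFieldType) (d : nat).
Implicit Types x y z : 'M[R]_d.

Lemma commC0l y : commC 0 y = 0.
Proof. by rewrite /commC mul0mx mulmx0 subrr. Qed.

Lemma commC0r x : commC x 0 = 0.
Proof. by rewrite /commC mul0mx mulmx0 subrr. Qed.

Lemma commCZDl a x y z : commC (a *: x + y) z = a *: commC x z + commC y z.
Proof.
by rewrite /commC mulmxDl mulmxDr -scalemxAl -scalemxAr scalerBr opprD addrACA.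
Qed.

Lemma commCZDr a x y z : commC z (a *: x + y) = a *: commC z x + commC z y.
Proof.
by rewrite /commC mulmxDl mulmxDr -scalemxAl -scalemxAr scalerBr opprD addrACA.
Qed.

End Commutator.

Section ImD.
Variables (R : realFieldType) (d k : nat).
Local Notation V := 'cV[R]_d.
Variable br : {ffun 'I_k.+2 -> V} -> V.

Definition Dcomb (l : seq ({ffun 'I_k.+1 -> V} * R)) : 'M[R]_d :=
  \sum_(p <- l) p.2 *: Dmx br p.1.

Lemma Dcomb1 u : Dcomb [:: (u, 1)] = Dmx br u.
Proof. by rewrite /Dcomb big_seq1 scale1r. Qed.

Lemma inImD0 : inImD br 0.
Proof. by exists [::]; rewrite big_nil. Qed.

Lemma inImD_Dmx u : inImD br (Dmx br u).
Proof. by exists [:: (u, 1)]; rewrite -/(Dcomb _) Dcomb1. Qed.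

Lemma inImD_Dcomb l : inImD br (Dcomb l).
Proof. by exists l. Qed.

Lemma inImDZD a x y : inImD br x -> inImD br y -> inImD br (a *: x + y).
Proof.
move=> [l ->] [m ->]; exists ([seq (p.1, a * p.2) | p <- l] ++ m).
rewrite big_cat big_map scaler_sumr; congr (_ + _).
by apply: eq_bigr => p _; rewrite scalerA.
Qed.

Lemma inImD_sum (I : Type) (r : seq I) (f : I -> 'M[R]_d) :
  (forall i, inImD br (f i)) -> inImD br (\sum_(i <- r) f i).
Proof.
move=> gf; apply: (big_rec (inImD br)); first exact: inImD0.
by move=> i x _ gx; rewrite -[f i]scale1r; apply: inImDZD.
Qed.

Lemma inImD_ind (P : 'M[R]_d -> Prop) :
  (forall u, P (Dmx br u)) -> P 0 ->
  (forall a x y, inImD br x -> inImD br y -> P x -> P y -> P (a *: x + y)) ->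
  forall x, inImD br x -> P x.
Proof.
move=> PD P0 PZD x [l ->]; elim: l => [|p l IHl]; first by rewrite big_nil.
rewrite big_cons; apply: PZD => //; first exact: inImD_Dmx.
exact: inImD_Dcomb.
Qed.

End ImD.

Section LeibnizAlgebra.
Variables (R : realFieldType) (d k : nat).
Local Notation V := 'cV[R]_d.
Variable br : {ffun 'I_k.+2 -> V} -> V.
Hypotheses (br_multilinear : multilinear br) (br_leibniz : leibniz_identity br).

Lemma Dop_is_linear u : linear (Dop br u).
Proof.
by move=> a x y; have := br_multilinear (snoc u 0) ord_max a x y;
  rewrite !upd_snoc_max.
Qed.
HB.instance Definition _ u :=
  GRing.isLinear.Build R V V _ (Dop br u) (Dop_is_linear u).

Lemma Dmx_mulmx u (w : V) : Dmx br u *m w = Dop br u w.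
Proof.
rewrite [in RHS](matrix_sum_delta w) linear_sum; apply/matrixP => i z.
rewrite (ord1 z) !mxE summxE; apply: eq_bigr => j _.
by rewrite big_ord1 linearZ !mxE mulrC.
Qed.

Lemma commC_Dmx u v :
  commC (Dmx br u) (Dmx br v) = \sum_(i < k.+1) Dmx br (upd v i (Dop br u (v i))).
Proof.
apply: mulmx_colI => w.
rewrite /commC mulmxBl -!mulmxA !Dmx_mulmx mulmx_suml.
under eq_bigr => i _ do rewrite Dmx_mulmx.
have := br_leibniz u (snoc v w); rewrite big_ord_recr /= snoc_max upd_snoc_max.
rewrite /Dop => ->; rewrite addrK; apply: eq_bigr => i _.
have -> : widen_ord (leqnSn k.+1) i = lift ord_max i.
  by apply: val_inj; rewrite /= /bump leqNgt ltn_ord.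
by rewrite snoc_lift upd_snoc_lift.
Qed.

Lemma inImD_commC x y : inImD br x -> inImD br y -> inImD br (commC x y).
Proof.
move=> gx gy; move: x gx; apply: inImD_ind => [u||a x1 x2 _ _ g1 g2].
- move: y gy; apply: inImD_ind => [v||a y1 y2 _ _ g1 g2].
  + by rewrite commC_Dmx; apply: inImD_sum => i; apply: inImD_Dmx.
  + by rewrite commC0r; apply: inImD0.
  + by rewrite commCZDr; apply: inImDZD.
- by rewrite commC0l; apply: inImD0.
- by rewrite commCZDl; apply: inImDZD.
Qed.

End LeibnizAlgebra.

Section MetricLeibnizAlgebra.
Variables (R : realFieldType) (d k : nat).
Local Notation V := 'cV[R]_d.
Local Notation tuple := {ffun 'I_k.+1 -> V}.
Variables (br : {ffun 'I_k.+2 -> V} -> V) (S : tuple -> R).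
Hypotheses (br_multilinear : multilinear br) (br_leibniz : leibniz_identity br).
Hypotheses (S_multilinear : multilinear_form S) (S_nondeg : Defs.nondegenerate S).
Hypotheses (S_unitarity : unitarity br S) (S_symmetry : symmetry_cond br S).

(* [pairD v x] is omega(x, D(v)) = S(x v_1, v_2, ..., v_(n-1)). *)
Definition pairD (v : tuple) (x : 'M[R]_d) : R := S (upd v ord0 (x *m v ord0)).

Lemma pairD_is_linear v : linear_for *%R (pairD v).
Proof. by move=> a x y; rewrite /pairD mulmxDl -scalemxAl S_multilinear. Qed.
HB.instance Definition _ v :=
  GRing.isLinear.Build R 'M[R]_d R _ (pairD v) (pairD_is_linear v).

Lemma pairD_Dmx u v : pairD v (Dmx br u) = S (upd v ord0 (Dop br u (v ord0))).
Proof. by rewrite /pairD Dmx_mulmx. Qed.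

Lemma pairD_DmxC u v : pairD v (Dmx br u) = pairD u (Dmx br v).
Proof. by rewrite !pairD_Dmx S_symmetry. Qed.

Lemma pairD_Dcomb v l :
  pairD v (Dcomb br l) = \sum_(q <- l) q.2 * pairD v (Dmx br q.1).
Proof. by rewrite linear_sum; apply: eq_bigr => q _; rewrite linearZ_LR. Qed.

Lemma pairD_DcombC l m :
  \sum_(p <- m) p.2 * pairD p.1 (Dcomb br l) =
  \sum_(q <- l) q.2 * pairD q.1 (Dcomb br m).
Proof.
under eq_bigr => p _ do rewrite pairD_Dcomb mulr_sumr.
rewrite exchange_big; apply: eq_bigr => q _.
rewrite pairD_Dcomb mulr_sumr; apply: eq_bigr => p _.
by rewrite pairD_DmxC mulrCA.
Qed.

(* Unitarity applied to (u, (D(v) w_1, w_2, ..., w_(n-1))), rewritten with the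
   Leibniz identity and the symmetry condition. *)
Lemma pairD_commC_Dmx u v w :
  pairD w (commC (Dmx br u) (Dmx br v)) =
  - pairD v (commC (Dmx br u) (Dmx br w)).
Proof.
set w' := upd w ord0 (Dop br v (w ord0)).
have w'_lift i : w' (lift ord0 i) = w (lift ord0 i) by rewrite upd_ne ?neq_lift.
have unit_head :
    pairD w (Dmx br u *m Dmx br v) = S (upd w' ord0 (Dop br u (w' ord0))).
  by rewrite /pairD /w' -mulmxA !Dmx_mulmx // upd_upd upd_at.
have leib_head : pairD v (Dmx br (upd w ord0 (Dop br u (w ord0)))) =
                 pairD w (Dmx br v *m Dmx br u).
  by rewrite pairD_DmxC pairD_Dmx upd_upd upd_at /pairD -mulmxA !Dmx_mulmx.
have leib_tail i :
    pairD v (Dmx br (upd w (lift ord0 i) (Dop br u (w (lift ord0 i))))) =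
    S (upd w' (lift ord0 i) (Dop br u (w' (lift ord0 i)))).
  have i0 : lift ord0 i != ord0 by rewrite eq_sym neq_lift.
  by rewrite pairD_DmxC pairD_Dmx w'_lift upd_ne 1?eq_sym // upd_updC.
have := S_unitarity u w'; rewrite big_ord_recl => /eqP.
rewrite addr_eq0 => /eqP unit_w'.
rewrite [in RHS]commC_Dmx // linear_sum big_ord_recl /= leib_head.
under eq_bigr do rewrite leib_tail.
by rewrite /commC linearB /= unit_head unit_w' opprD addrC.
Qed.

Lemma pairD_commC_skew x v w : inImD br x ->
  pairD w (commC x (Dmx br v)) = - pairD v (commC x (Dmx br w)).
Proof.
move=> gx; move: x gx; apply: inImD_ind => [u||a x1 x2 _ _ e1 e2].
- exact: pairD_commC_Dmx.
- by rewrite !commC0l !linear0 oppr0.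
- by rewrite !commCZDl !linearP /= e1 e2 opprD mulrN.
Qed.

Definition Dexpansion (y : 'M[R]_d) : seq (tuple * R) :=
  epsilon (inhabits [::]) (fun l => y = Dcomb br l).

Lemma DexpansionK y : inImD br y -> Dcomb br (Dexpansion y) = y.
Proof. by move=> gy; rewrite {2}(epsilon_spec (inhabits [::]) _ gy). Qed.

(* Defined through a chosen expansion of the second argument; by omega_Dcombl
   the value does not depend on that choice. *)
Definition omega (x y : 'M[R]_d) : R :=
  \sum_(p <- Dexpansion y) p.2 * pairD p.1 x.

Lemma omega_Dcombl l y :
  inImD br y -> omega (Dcomb br l) y = \sum_(q <- l) q.2 * pairD q.1 y.
Proof. by move=> gy; rewrite /omega pairD_DcombC DexpansionK. Qed.

Lemma omega_Dcombr x m :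
  inImD br x -> omega x (Dcomb br m) = \sum_(p <- m) p.2 * pairD p.1 x.
Proof.
by move=> [l ->]; rewrite (omega_Dcombl l (inImD_Dcomb br m)) pairD_DcombC.
Qed.

Lemma omega_Dmxl u y : inImD br y -> omega (Dmx br u) y = pairD u y.
Proof. by move=> gy; rewrite -Dcomb1 omega_Dcombl // big_seq1 mul1r. Qed.

Lemma omega_Dmxr x v : inImD br x -> omega x (Dmx br v) = pairD v x.
Proof. by move=> gx; rewrite -Dcomb1 omega_Dcombr // big_seq1 mul1r. Qed.

Lemma omegaC x y : inImD br x -> inImD br y -> omega x y = omega y x.
Proof. by move=> gx gy; rewrite -{1}(DexpansionK gx) omega_Dcombl. Qed.

Lemma omegaZDl a x y z : omega (a *: x + y) z = a * omega x z + omega y z.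
Proof.
rewrite /omega mulr_sumr -big_split; apply: eq_bigr => p _ /=.
by rewrite linearP /= mulrDr mulrCA.
Qed.

Lemma omegaZDr a x y z : inImD br x -> inImD br y -> inImD br z ->
  omega z (a *: x + y) = a * omega z x + omega z y.
Proof.
move=> gx gy gz; rewrite (omegaC gz (inImDZD a gx gy)) omegaZDl.
by rewrite (omegaC gz gx) (omegaC gz gy).
Qed.

Lemma omega0l y : omega 0 y = 0.
Proof. by rewrite /omega big1 // => p _; rewrite linear0 mulr0. Qed.

Lemma omega0r x : inImD br x -> omega x 0 = 0.
Proof. by move=> gx; rewrite omegaC ?omega0l //; apply: inImD0. Qed.

Lemma omega_nondeg x :
  inImD br x -> (forall y, inImD br y -> omega x y = 0) -> x = 0.
Proof.
move=> gx x_perp; apply: mulmx_colI => w; rewrite mul0mx; apply: S_nondeg => v.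
have := x_perp _ (inImD_Dmx br (consv w v)).
by rewrite omega_Dmxr // /pairD upd_consv_ord0 consv_ord0.
Qed.

Lemma omega_commC x y z : inImD br x -> inImD br y -> inImD br z ->
  omega (commC x y) z = - omega y (commC x z).
Proof.
move=> gx gy gz.
have gxt t : inImD br t -> inImD br (commC x t) by apply: inImD_commC.
move: y gy; apply: inImD_ind => [v||a y1 y2 g1 g2 e1 e2].
- have gv := inImD_Dmx br v; have gxv := gxt _ gv.
  move: z gz; apply: inImD_ind => [w||a z1 z2 g1 g2 e1 e2].
  + have gxw := gxt _ (inImD_Dmx br w).
    by rewrite omega_Dmxr // omega_Dmxl // pairD_commC_skew.
  + by rewrite commC0r !omega0r ?oppr0.
  + have [gxz1 gxz2] := (gxt _ g1, gxt _ g2).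
    by rewrite commCZDr !omegaZDr // e1 e2 opprD mulrN.
- by rewrite commC0r omega0l omega0l oppr0.
- by rewrite commCZDr !omegaZDl e1 e2 opprD mulrN.
Qed.

End MetricLeibnizAlgebra.

Theorem mainTheorem3 (R : realFieldType) (d k : nat)
  (br : {ffun 'I_k.+2 -> 'cV[R]_d} -> 'cV[R]_d)
  (S : {ffun 'I_k.+1 -> 'cV[R]_d} -> R) :
  generalized_metric_nLeibniz br S ->
  (forall x y, inImD br x -> inImD br y -> inImD br (commC x y)) /\
  exists omega : 'M[R]_d -> 'M[R]_d -> R,
    [/\ (forall (a : R) x y z, inImD br x -> inImD br y -> inImD br z ->
           omega (a *: x + y) z = a * omega x z + omega y z /\
           omega z (a *: x + y) = a * omega z x + omega z y),
        (forall u v : {ffun 'I_k.+1 -> 'cV[R]_d},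
           omega (Dmx br u) (Dmx br v) = S (upd v ord0 (Dop br u (v ord0)))),
        (forall x y, inImD br x -> inImD br y -> omega x y = omega y x),
        (forall x, inImD br x -> (forall y, inImD br y -> omega x y = 0) -> x = 0)
      & (forall x y z, inImD br x -> inImD br y -> inImD br z ->
           omega (commC x y) z = - omega y (commC x z))].
Proof.
move=> [[br_ml br_leib S_ml _] [S_nondeg S_unit S_sym]].
split=> [x y|]; first exact: inImD_commC.
exists (omega br S); split.
- by move=> a x y z gx gy gz; split; [exact: omegaZDl | exact: omegaZDr].
- by move=> u v; rewrite omega_Dmxr ?pairD_Dmx //; apply: inImD_Dmx.
- by move=> x y; exact: omegaC.
- by move=> x; exact: omega_nondeg.
- by move=> x y z; exact: omega_commC.
Qed.
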